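(* There exists a temporal clique $G$ on $n$ vertices such that every temporal $2$-spanner of $G$ has size $\Omega(n^2)$.
   Context: A temporal graph is an undirected graph $G=(V,E)$ with a labeling $\lambda: E\to\mathbb{N}^+$; a temporal clique is one whose underlying graph is complete. A temporal path is a path whose traversed edges have non-decreasing labels in the order of traversal; its length is its number of edges, and $d_G(u,v)$ is the minimum length of a temporal path from $u$ to $v$ in $G$ ($+\infty$ if none). A temporal $\alpha$-spanner of $G$ is a subgraph $H$ with $V(H)=V$, $E(H)\subseteq E$ (same labels), such that $d_H(u,v)\le\alpha\, d_G(u,v)$ for all $u,v\in V$. The size of $H$ is its number of edges. *)

From mathcomp Require Import all_boot.
Set Implicit Arguments. Unset Strict Implicit. Unset Printing Implicit Defensive.

(* An (undirected) edge is a 2-element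
   subset {x,y} of 'I_n. A labeling is a
   function lam : {set 'I_n} -> nat (only its values on edges matter). *)

Definition clique_edges (n : nat) : {set {set 'I_n}} := [set e : {set 'I_n} | #|e| == 2].

Definition traversed {n : nat} (u : 'I_n) (p : seq 'I_n) : seq {set 'I_n} :=
  pairmap (fun x y => [set x; y]) u p.

(* u :: p is a temporal path in (E, lam): distinct vertices, consecutive
   vertices joined by an edge of E, labels non-decreasing along the path.
   Its length is size p; it goes from u to last u p. *)
Definition temporal_path {n : nat} (E : {set {set 'I_n}}) (lam : {set 'I_n} -> nat)
    (u : 'I_n) (p : seq 'I_n) : bool :=
  [&& uniq (u :: p),
      path (fun x y => (x != y) && ([set x; y] \in E)) u p
    & sorted leq (map lam (traversed u p))].

(* H is a temporal alpha-spanner of G (edge sets E_H, E_G, same labeling lam):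
   E_H is a subset of E_G and d_H(u,v) <= alpha * d_G(u,v) for all u, v.
   Unfolded: whenever G has a temporal u-v path of length k, H has one of
   length at most alpha * k (if d_G(u,v) = +oo the condition is vacuous). *)
Definition temporal_spanner {n : nat} (alpha : nat) (EG EH : {set {set 'I_n}})
    (lam : {set 'I_n} -> nat) : Prop :=
  EH \subset EG /\
  forall (u : 'I_n) (p : seq 'I_n), temporal_path EG lam u p ->
    exists q : seq 'I_n,
      [/\ temporal_path EH lam u q, last u q = last u p & size q <= alpha * size p].

From mathcomp Require Import all_boot.
From mathcomp Require Import zify.

Set Implicit Arguments.
Unset Strict Implicit.
Unset Printing Implicit Defensive.

(* Split the vertices into halves A and B and label the edges inside A by 3,
   the edges between A and B by 2 and the edges inside B by 1.  A temporal
   path a, x, b from a in A to b in B would have to go down in label, so the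
   only temporal path of length at most 2 from a to b is the edge {a, b}
   itself: a temporal 2-spanner keeps all |A| |B| ~ n^2/4 crossing edges. *)

Lemma temporal_path1 n (E : {set {set 'I_n}}) lam (a b : 'I_n) :
  temporal_path E lam a [:: b] = (a != b) && ([set a; b] \in E).
Proof. by rewrite /temporal_path /= mem_seq1 !andbT andbA andbb. Qed.

Lemma temporal_path2 n (E : {set {set 'I_n}}) lam (a x b : 'I_n) :
  temporal_path E lam a [:: x; b] -> lam [set a; x] <= lam [set x; b].
Proof. by case/and3P=> _ _ /=; rewrite andbT. Qed.

Lemma spanner2_keeps_edge n (EG EH : {set {set 'I_n}}) lam (a b : 'I_n) :
  temporal_spanner 2 EG EH lam -> a != b -> [set a; b] \in EG ->
  (forall x, lam [set x; b] < lam [set a; x]) -> [set a; b] \in EH.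
Proof.
move=> [_ spanner] neq_ab ab_EG no_detour.
have edge_ab : temporal_path EG lam a [:: b] by rewrite temporal_path1 neq_ab.
have [q [path_q last_q size_q]] := spanner a [:: b] edge_ab.
case: q path_q last_q size_q => [|x [|x' [|? ?]]] //=.
- by move=> _ eq_ba; rewrite eq_ba eqxx in neq_ab.
- by move=> /[swap] <-; rewrite temporal_path1 => /andP[].
- move=> /[swap] -> /temporal_path2 le_lam _.
  by have := no_detour x; rewrite ltnNge le_lam.
Qed.

Definition cut_label n (A : {set 'I_n}) (e : {set 'I_n}) : nat :=
  if e \subset A then 3 else if e \subset ~: A then 1 else 2.

Lemma cut_label_gt0 n (A e : {set 'I_n}) : 0 < cut_label A e.
Proof. by rewrite /cut_label; case: ifP => //; case: ifP. Qed.

Lemma cut_label_no_detour n (A : {set 'I_n}) (a b x : 'I_n) :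
  a \in A -> b \notin A -> cut_label A [set x; b] < cut_label A [set a; x].
Proof.
move=> aA bA; rewrite /cut_label !subUset !sub1set !in_setC aA (negbTE bA) /=.
by rewrite andbF; case: (x \in A).
Qed.

Lemma card_cut_edges (T : finType) (A : {set T}) :
  #|[set [set a; b] | a in A, b in ~: A]| = #|A| * #|~: A|.
Proof.
rewrite curry_imset2X -cardsX card_in_imset //.
move=> [a b] [a' b'] /setXP[aA bB] /setXP[aA' bB'] /= eq_ab.
have : a \in [set a'; b'] by rewrite -eq_ab set21.
rewrite !inE => /orP[/eqP ea | /eqP eb]; last by rewrite inE -eb aA in bB'.
have : b \in [set a'; b'] by rewrite -eq_ab set22.
rewrite !inE => /orP[/eqP eb' | /eqP eb]; first by rewrite inE eb' -ea aA in bB.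
by rewrite ea eb.
Qed.

Lemma card_ord_ltn n k : k <= n -> #|[set i : 'I_n | i < k]| = k.
Proof.
move=> le_kn.
have -> : [set i : 'I_n | i < k] = widen_ord le_kn @: [set: 'I_k].
  apply/setP=> i; rewrite inE; apply/idP/imsetP.
    by move=> lt_ik; exists (Ordinal lt_ik); rewrite ?inE //; apply: val_inj.
  by case=> j _ ->; rewrite /= ltn_ord.
by rewrite card_imset ?cardsT ?card_ord // => x y /(congr1 val) /= /ord_inj.
Qed.

Lemma sqrn_le_half_mul n : 1 < n -> n ^ 2 <= 5 * (n./2 * (n - n./2)).
Proof. by have := odd_double_half n; case: (odd n) => /=; nia. Qed.

Theorem theorem6 :
  exists c : nat, 0 < c /\
  exists N : nat, forall n : nat, N <= n ->
    exists lam : {set 'I_n} -> nat,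
      (forall e : {set 'I_n}, e \in clique_edges n -> 0 < lam e) /\
      forall H : {set {set 'I_n}},
        temporal_spanner 2 (clique_edges n) H lam -> n ^ 2 <= c * #|H|.
Proof.
exists 5; split => //; exists 2 => n le2n.
pose A := [set i : 'I_n | i < n./2].
exists (cut_label A); split=> [e _|H spanner]; first exact: cut_label_gt0.
have cardA : #|A| = n./2 by rewrite card_ord_ltn // -leq_double; lia.
have cardB : #|~: A| = n - n./2 by rewrite cardsCs setCK card_ord cardA.
have cut_sub_H : [set [set a; b] | a in A, b in ~: A] \subset H.
  apply/subsetP=> _ /imset2P[a b aA bB ->]; rewrite in_setC in bB.
  have neq_ab : a != b by apply: contraNneq bB => <-.
  apply: (spanner2_keeps_edge spanner neq_ab).
    by rewrite inE cards2 neq_ab.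
  by move=> x; apply: cut_label_no_detour.
apply: leq_trans (sqrn_le_half_mul le2n) _; rewrite leq_mul2l /=.
by rewrite -cardB -cardA -card_cut_edges subset_leq_card.
Qed.
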